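(* Let $A$ be an algebra equipped with the idempotent grading associated to a decomposition $1_A=e^\ast_0+\cdots+e^\ast_n$, and let $B\subseteq A$ be a complete $\mathbb{N}$-graded subalgebra, with $H:=B_0$ and $B_+:=\bigoplus_{j>0}B_j$. If $A$ is projective as a right $B$-module and $B$ is projective as a left $H$-module, then $(B,H)$ is a pre-Borelic pair of $A$ (with respect to the ideal $B_+$).
   Context: All algebras are finite-dimensional, associative and unital over a field $\Bbbk$; subalgebras contain the unit; modules are finitely generated unital left modules. Idempotent grading: given mutually orthogonal (not necessarily primitive, possibly zero) idempotents $e^\ast_0,\dots,e^\ast_n$ with $1_A=\sum_i e^\ast_i$, set $A_j=\bigoplus_{i}e^\ast_iAe^\ast_{i+j}$ (sum over $i$ with $0\le i,i+j\le n$) for $j\in\mathbb{Z}$; then $A=\bigoplus_jA_j$ is a $\mathbb{Z}$-graded algebra. Put $A_-=\bigoplus_{j<0}A_j$. An $\mathbb{N}$-graded subalgebra is a graded subalgebra $B$ with $B_j=0$ for $j<0$; it is complete if $A=B\oplus A_-B$. A pair $(B,H)$ of subalgebras $H\subseteq B\subseteq A$ is a pre-Borelic pair of $A$ if there is a two-sided ideal $B_+$ of $B$ with $B=H\oplus B_+$ such that: (I) $A$ is projective as a right $B$-module and $B$ is projective as a left $H$-module; (II) for every simple $A$-module $L$, the space $L^{B_+}=\{v\in L: xv=0\ \forall x\in B_+\}$ (a $B$-module annihilated by $B_+$, hence an $H$-module via $H\cong B/B_+$) is a simple $H$-module, and $L\mapsto L^{B_+}$ induces a bijection between isomorphism classes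 of simple $A$-modules and of simple $H$-modules; (III) $B_+$ is contained in the Jacobson radical of $B$. *)

(* finite-dimensional algebras as falgType, modules as matrix representations *)
From HB Require Import structures.
From mathcomp Require Import all_boot all_order all_algebra all_field.
Set Implicit Arguments. Unset Strict Implicit. Unset Printing Implicit Defensive.
Import GRing.Theory.
Local Open Scope ring_scope.

Section Defs.
Variables (F : fieldType) (A : falgType F).

Definition idem_decomp n (e : 'I_n.+1 -> A) :=
  (forall i j, e i * e j = if i == j then e i else 0) /\ \sum_(i < n.+1) e i = 1.

Definition grpiece n (e : 'I_n.+1 -> A) (j : int) : {vspace A} :=
  (\sum_(i < n.+1) \sum_(k < n.+1 | (k%:Z - i%:Z == j)%R)
      (<[e i]> * fullv * <[e k]>))%VS.

Definition Aminus n (e : 'I_n.+1 -> A) : {vspace A} :=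
  (\sum_(j < n) grpiece e (- (j.+1)%:Z))%VS.

Definition Bplus n (e : 'I_n.+1 -> A) (B : {vspace A}) : {vspace A} :=
  (\sum_(j < n) (B :&: grpiece e (j.+1)%:Z))%VS.

Definition Bzero n (e : 'I_n.+1 -> A) (B : {vspace A}) : {vspace A} :=
  (B :&: grpiece e 0)%VS.

Definition is_subalg (B : {vspace A}) := (1 \in B) /\ (B * B <= B)%VS.

(** graded subspace: B = (+)_j (B :&: A_j), j = -n, ..., n (A_j = 0 otherwise) *)
Definition graded n (e : 'I_n.+1 -> A) (B : {vspace A}) :=
  B = (\sum_(j < (n.*2).+1) (B :&: grpiece e (j%:Z - n%:Z)))%VS.

Definition Ngraded_subalg n (e : 'I_n.+1 -> A) (B : {vspace A}) :=
  [/\ is_subalg B, graded e B & forall j : int, j < 0 -> (B :&: grpiece e j)%VS = 0%VS].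

Definition complete n (e : 'I_n.+1 -> A) (B : {vspace A}) :=
  (B + Aminus e * B)%VS = fullv /\ (B :&: (Aminus e * B))%VS = 0%VS.

(** M (a subspace of A, closed under right mult. by S) is projective as a right
    S-module: it is a direct summand of a free module S^k, i.e. there are right
    S-linear maps i = (f_j)_j : M -> S^k and p : S^k -> M, p(s) = \sum_j a_j s_j,
    with p \o i = id. *)
Definition proj_right (M S : {vspace A}) :=
  exists k (a : 'I_k -> A) (f : 'I_k -> 'End(A)),
    [/\ forall j, a j \in M,
        forall j x, x \in M -> f j x \in S,
        forall j x s, x \in M -> s \in S -> f j (x * s) = f j x * s &
        forall x, x \in M -> \sum_(j < k) a j * f j x = x].

Definition proj_left (M S : {vspace A}) :=
  exists k (a : 'I_k -> A) (f : 'I_k -> 'End(A)),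
    [/\ forall j, a j \in M,
        forall j x, x \in M -> f j x \in S,
        forall j x s, x \in M -> s \in S -> f j (s * x) = s * f j x &
        forall x, x \in M -> \sum_(j < k) f j x * a j = x].

(** A (finite-dimensional, unital, left) module over the subalgebra S of A on
    F^m (row vectors): x acts by v |-> v *m rho x. Only the values on S matter. *)
Definition is_rep (S : {vspace A}) m (rho : A -> 'M[F]_m) :=
  [/\ rho 1 = 1%:M,
      {in S &, forall a b, rho (a + b) = rho a + rho b},
      {in S, forall a (c : F), rho (c *: a) = c *: rho a} &
      {in S &, forall a b, rho (a * b) = rho b *m rho a}].

Definition stable (S : {vspace A}) m (rho : A -> 'M[F]_m) (U : 'M[F]_m) :=
  forall s, s \in S -> (U *m rho s <= U)%MS.

Definition simple_sub (S : {vspace A}) m (rho : A -> 'M[F]_m) (U : 'M[F]_m) :=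
  [/\ stable S rho U, U != 0 &
      forall V : 'M[F]_m, stable S rho V -> (V <= U)%MS -> V = 0 \/ (V == U)%MS].

Definition iso_sub (S : {vspace A}) m1 (rho1 : A -> 'M[F]_m1) (U1 : 'M[F]_m1)
    m2 (rho2 : A -> 'M[F]_m2) (U2 : 'M[F]_m2) :=
  exists f : 'M[F]_(m1, m2),
    [/\ (U1 *m f == U2)%MS, \rank (U1 *m f) = \rank U1 &
        forall s, s \in S -> U1 *m rho1 s *m f = U1 *m f *m rho2 s].

Definition fixsp (Bp : {vspace A}) m (rho : A -> 'M[F]_m) : 'M[F]_m :=
  (\bigcap_(b <- vbasis Bp) kermx (rho b))%MS.

Definition left_ideal (S I : {vspace A}) := (I <= S)%VS /\ (S * I <= I)%VS.
Definition max_left_ideal (S I : {vspace A}) :=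
  [/\ left_ideal S I, I != S &
      forall I', left_ideal S I' -> (I <= I')%VS -> I' = I \/ I' = S].
Definition in_jacobson (S : {vspace A}) (x : A) :=
  x \in S /\ forall I, max_left_ideal S I -> x \in I.

Definition pre_borelic (B H Bp : {vspace A}) :=
  [/\ is_subalg B /\ is_subalg H /\ (H <= B)%VS,
      [/\ (Bp <= B)%VS, (B * Bp <= Bp)%VS & (Bp * B <= Bp)%VS]
        /\ (H + Bp)%VS = B /\ (H :&: Bp)%VS = 0%VS,
      proj_right fullv B /\ proj_left B H,
      [/\ forall m (rho : A -> 'M[F]_m), is_rep fullv rho ->
            simple_sub fullv rho 1%:M -> simple_sub H rho (fixsp Bp rho),
          forall m1 (rho1 : A -> 'M[F]_m1) m2 (rho2 : A -> 'M[F]_m2),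
            is_rep fullv rho1 -> simple_sub fullv rho1 1%:M ->
            is_rep fullv rho2 -> simple_sub fullv rho2 1%:M ->
            (iso_sub fullv rho1 1%:M rho2 1%:M <->
             iso_sub H rho1 (fixsp Bp rho1) rho2 (fixsp Bp rho2)) &
          forall m' (rho' : A -> 'M[F]_m'), is_rep H rho' ->
            simple_sub H rho' 1%:M ->
            exists m (rho : A -> 'M[F]_m),
              [/\ is_rep fullv rho, simple_sub fullv rho 1%:M &
                  iso_sub H rho (fixsp Bp rho) rho' 1%:M]] &
      forall x, x \in Bp -> in_jacobson B x].

End Defs.

From Stdlib Require Import Classical.
From HB Require Import structures.
From mathcomp Require Import all_boot all_order all_algebra all_field zify.
Import GRing.Theory.
Set Implicit Arguments. Unset Strict Implicit. Unset Printing Implicit Defensive.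
Local Open Scope ring_scope.

(* Give the Peirce component [e_i x e_k] the degree [k - i].  Then [B] lives in
   degrees [>= 0] and [B_+] in degrees [>= 1], so [B_+] is a nilpotent ideal of
   [B] complementary to [H = B_0]; being nilpotent, it lies in the Jacobson
   radical.  For a simple [A]-module [L], the fixed space [L^{B_+}] is
   concentrated in the lowest degree [i0] with [e_i0 L <> 0].  Completeness
   [A = B + A_- B] is the crux: on a [B_+]-invariant vector of degree [i], any
   [x] in [A] acts in degree [i] like some [h] in [H] chosen independently of
   the module, and reaches no lower degree.  Hence any nonzero vector of
   [L^{B_+}] generates it over [H], so it is simple, and two simple [A]-modules
   with isomorphic fixed spaces have generators with the same annihilator in
   [A].  Conversely, a simple [H]-module [H v0] is the fixed space of [A / I]
   for a maximal left ideal [I] containing [A (B_+ + ann_H v0)], which avoids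
   [1] by completeness again. *)

Section LinearClosure.
Variables (F : fieldType) (A : falgType F).

Definition lin_closed (P : A -> Prop) :=
  [/\ P 0, forall x y, P x -> P y -> P (x + y) & forall (a : F) x, P x -> P (a *: x)].

Lemma lin_closed_fixed (a b : A) : lin_closed (fun x => a * x * b = x).
Proof.
split=> [|x y ex ey|c x ex]; first by rewrite mulr0 mul0r.
  by rewrite mulrDr mulrDl ex ey.
by rewrite -scalerAr -scalerAl ex.
Qed.

Variable P : A -> Prop.
Hypothesis linP : lin_closed P.

Lemma lin_closedB x y : P x -> P y -> P (x - y).
Proof. by case: linP => _ PD PZ Px Py; rewrite -scaleN1r; apply: PD (PZ _ _ Py). Qed.

Lemma lin_closed_sum (I : Type) (r : seq I) (Q : pred I) (f : I -> A) :
  (forall i, Q i -> P (f i)) -> P (\sum_(i <- r | Q i) f i).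
Proof.
case: linP => P0 PD _ Pf; elim/big_rec: _ => // i x Qi Px; exact: PD (Pf _ Qi) Px.
Qed.

Lemma lin_closed_span (X : seq A) :
  (forall x, x \in X -> P x) -> forall x, x \in <<X>>%VS -> P x.
Proof.
move=> PX x; rewrite -[X]/(tval (in_tuple X)) => /coord_span ->.
apply: lin_closed_sum => i _; case: linP => _ _ PZ; apply/PZ/PX/mem_nth.
exact: ltn_ord.
Qed.

Lemma lin_closed_prodv (U V : {vspace A}) :
  (forall u v, u \in U -> v \in V -> P (u * v)) -> forall x, x \in (U * V)%VS -> P x.
Proof.
move=> PUV x; rewrite [@prodv _ _]unlock; apply: lin_closed_span => y.
by case/allpairsP => [[u v] /= [Uu Vv ->]]; apply: PUV; apply: vbasis_mem.
Qed.

Lemma lin_closed_sumv (I : finType) (Q : pred I) (Us : I -> {vspace A}) :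
  (forall i x, Q i -> x \in Us i -> P x) ->
  forall x, x \in (\sum_(i | Q i) Us i)%VS -> P x.
Proof.
move=> PU x /memv_sumP [vs Uvs ->]; apply: lin_closed_sum => i Qi.
exact: PU (Uvs i Qi).
Qed.

End LinearClosure.

(** * Peirce decomposition and degrees *)

Section Peirce.
Variables (F : fieldType) (A : falgType F) (n : nat) (e : 'I_n.+1 -> A).
Hypothesis He : idem_decomp e.

Lemma idem_mul i j : e i * e j = if i == j then e i else 0.
Proof. by case: He. Qed.

Lemma sum_idem : \sum_(i < n.+1) e i = 1.
Proof. by case: He. Qed.

Lemma idem_id i : e i * e i = e i.
Proof. by rewrite idem_mul eqxx. Qed.

Lemma idem_orth i j : i != j -> e i * e j = 0.
Proof. by rewrite idem_mul => /negbTE ->. Qed.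

Lemma peirce_suml i x : e i * x = \sum_(k < n.+1) e i * x * e k.
Proof. by rewrite -mulr_sumr sum_idem mulr1. Qed.

Lemma peirce_sumr k x : x * e k = \sum_(i < n.+1) e i * x * e k.
Proof. by rewrite -mulr_suml -mulr_suml sum_idem mul1r. Qed.

Lemma peirce_sum x : x = \sum_(i < n.+1) \sum_(k < n.+1) e i * x * e k.
Proof.
rewrite -{1}[x]mul1r -sum_idem mulr_suml; apply: eq_bigr => i _.
exact: peirce_suml.
Qed.

Lemma peirce_eq0 x : (forall i k, e i * x * e k = 0) -> x = 0.
Proof. by move=> x0; rewrite [x]peirce_sum big1 // => i _; rewrite big1. Qed.

Lemma peirce_mul i k x y :
  e i * (x * y) * e k = \sum_(l < n.+1) (e i * x * e l) * (e l * y * e k).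
Proof.
under eq_bigr do rewrite !mulrA -[_ * e _ * e _]mulrA idem_id.
by rewrite -!mulr_suml -mulr_sumr sum_idem mulr1 !mulrA.
Qed.

Lemma lin_closed_peirce0 (Q : 'I_n.+1 -> 'I_n.+1 -> bool) :
  lin_closed (fun x => forall i k, Q i k -> e i * x * e k = 0).
Proof.
split=> [i k _|x y x0 y0 i k Qik|a x x0 i k Qik]; first by rewrite mulr0 mul0r.
  by rewrite mulrDr mulrDl x0 // y0 // addr0.
by rewrite -scalerAr -scalerAl x0 // scaler0.
Qed.

(* As in [grpiece], the Peirce component [e i * x * e k] has degree [k - i]. *)
Definition homog (j : int) x :=
  forall i k : 'I_n.+1, k%:Z - i%:Z != j -> e i * x * e k = 0.
Definition deg_ge (d : nat) x :=
  forall i k : 'I_n.+1, (k < i + d)%N -> e i * x * e k = 0.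
Definition deg_neg x :=
  forall i k : 'I_n.+1, (i <= k)%N -> e i * x * e k = 0.

Lemma homog_lin_closed j : lin_closed (homog j).
Proof. exact: lin_closed_peirce0. Qed.
Lemma deg_ge_lin_closed d : lin_closed (deg_ge d).
Proof. exact: lin_closed_peirce0. Qed.
Lemma deg_neg_lin_closed : lin_closed deg_neg.
Proof. exact: lin_closed_peirce0. Qed.

Lemma peirce_block i k x : x \in (<[e i]> * fullv * <[e k]>)%VS -> e i * x * e k = x.
Proof.
move=> xin; apply: (lin_closed_prodv (lin_closed_fixed (e i) (e k))) xin.
move=> u _ Uu /vlineP [c ->].
have eu : e i * u = u.
  rewrite -[LHS]mulr1; apply: (lin_closed_prodv (lin_closed_fixed (e i) 1)) Uu.
  move=> _ y /vlineP [c' ->] _.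
  by rewrite mulr1 -!scalerAl -scalerAr mulrA idem_id.
rewrite -!scalerAr -scalerAl; congr (_ *: _).
by rewrite -mulrA -(mulrA u) idem_id mulrA eu.
Qed.

Lemma homogP j x : reflect (homog j x) (x \in grpiece e j).
Proof.
apply: (iffP idP) => [xj|hx].
  apply: (lin_closed_sumv (homog_lin_closed j)) xj => i y _.
  apply: (lin_closed_sumv (homog_lin_closed j)) => k z /eqP <- /peirce_block <- i' k' ne.
  have [ii|ni] := eqVneq i' i; last by rewrite !mulrA idem_orth ?mul0r.
  have [kk|nk] := eqVneq k' k; last by rewrite -!mulrA idem_orth ?mulr0 // eq_sym.
  by rewrite ii kk eqxx in ne.
rewrite [x]peirce_sum; apply: memv_sumr => i _.
rewrite (bigID (fun k : 'I_n.+1 => k%:Z - i%:Z == j)) /=.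
rewrite [X in _ + X]big1 ?addr0 => [|k /hx //]; apply: memv_sumr => k _.
by rewrite !memv_mul ?memv_line ?memvf.
Qed.

Lemma homogM j j' x y : homog j x -> homog j' y -> homog (j + j') (x * y).
Proof.
move=> hx hy i k ne; rewrite peirce_mul big1 // => l _.
have [lj|/hx -> //] := eqVneq (l%:Z - i%:Z) j; last by rewrite mul0r.
by rewrite hy ?mulr0 //; apply: contra ne => /eqP lj'; apply/eqP; lia.
Qed.

Lemma homog0_1 : homog 0 1.
Proof.
move=> i k ne; rewrite mulr1 idem_orth //.
by apply: contra ne => /eqP ->; rewrite subrr.
Qed.

Lemma homog0_comm x i : homog 0 x -> e i * x = x * e i.
Proof.
move=> hx; rewrite peirce_suml peirce_sumr (bigD1 i) //= [RHS](bigD1 i) //=.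
by rewrite !big1 ?addr0 // => k ki; rewrite hx // subr_eq0 eqz_nat // eq_sym.
Qed.

Lemma homog0_peirce x i : homog 0 x -> e i * x * e i = x * e i.
Proof. by move=> hx; rewrite homog0_comm // -mulrA idem_id. Qed.

Lemma homog_mul_idem (d : int) x i : homog d x ->
  x * e i = 0 \/ exists l, x * e i = e l * x.
Proof.
move=> hx; case: (pickP (fun l : 'I_n.+1 => i%:Z - l%:Z == d)) => [l /eqP li|none].
  right; exists l; rewrite peirce_sumr peirce_suml (bigD1 l) //= [RHS](bigD1 i) //=.
  by rewrite !big1 ?addr0 // => k /eqP kl; apply: hx; apply/eqP => kd;
    apply: kl; apply: val_inj => /=; lia.
by left; rewrite peirce_sumr big1 // => l _; rewrite hx ?none.
Qed.

Lemma deg_geM d d' x y : deg_ge d x -> deg_ge d' y -> deg_ge (d + d') (x * y).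
Proof.
move=> hx hy i k lt_k; rewrite peirce_mul big1 // => l _.
have [/hx -> //|le_l] := ltnP l (i + d); first by rewrite mul0r.
by rewrite hy ?mulr0 //; lia.
Qed.

Lemma deg_geW d d' x : (d' <= d)%N -> deg_ge d x -> deg_ge d' x.
Proof. by move=> le_d hx i k lt_k; apply: hx; lia. Qed.

Lemma deg_ge_eq0 x : deg_ge n.+1 x -> x = 0.
Proof. by move=> hx; apply: peirce_eq0 => i k; apply: hx; have := ltn_ord k; lia. Qed.

Lemma homog_deg_ge (d : nat) x : homog d x -> deg_ge d x.
Proof. by move=> hx i k lt_k; apply: hx; apply/eqP; lia. Qed.

Lemma homog_deg_neg (d : nat) x : homog (- d.+1%:Z) x -> deg_neg x.
Proof. by move=> hx i k le_ik; apply: hx; apply/eqP; lia. Qed.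

Lemma homog0_deg_ge1_eq0 x : homog 0 x -> deg_ge 1%N x -> x = 0.
Proof.
move=> h0 h1; apply: peirce_eq0 => i k.
have [<-|ik] := eqVneq i k; first by apply: h1; rewrite addn1.
by apply: h0; rewrite subr_eq0 eqz_nat eq_sym.
Qed.

End Peirce.

(** * The graded subalgebra [B] *)

Section GradedSubalgebra.
Variables (F : fieldType) (A : falgType F) (n : nat) (e : 'I_n.+1 -> A) (B : {vspace A}).
Hypotheses (He : idem_decomp e) (Bgraded : Ngraded_subalg e B).

Local Notation H := (Bzero e B).
Local Notation Bp := (Bplus e B).

Lemma memB1 : 1 \in B.
Proof. by case: Bgraded => [[]]. Qed.

Lemma memBM x y : x \in B -> y \in B -> x * y \in B.
Proof. by case: Bgraded => [[_ /prodvP BB] _ _]; apply: BB. Qed.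

Lemma memBX x k : x \in B -> x ^+ k \in B.
Proof. by move=> Bx; elim: k => [|k IHk]; rewrite ?expr0 ?memB1 // exprS memBM. Qed.

Lemma Bplus_sub : (Bp <= B)%VS.
Proof. by apply/subv_sumP => j _; rewrite capvSl. Qed.

Lemma Bzero_sub : (H <= B)%VS.
Proof. exact: capvSl. Qed.

Lemma B_deg_ge0 x : x \in B -> deg_ge e 0%N x.
Proof.
case: Bgraded => [_ B_gr B_neg]; rewrite {1}B_gr.
apply: (lin_closed_sumv (deg_ge_lin_closed e 0%N)) => j y _.
have [lt_jn|le_nj] := ltnP j n.
  by rewrite B_neg ?memv0 => [/eqP -> i k _|]; rewrite ?mulr0 ?mul0r //; lia.
case/memv_capP => _ /(homogP He) hy i k lt_k; apply: hy; apply/eqP; lia.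
Qed.

Lemma Bplus_deg_ge1 x : x \in Bp -> deg_ge e 1%N x.
Proof.
apply: (lin_closed_sumv (deg_ge_lin_closed e 1%N)) => j y _ /memv_capP [_ /(homogP He)].
by move/homog_deg_ge; apply: deg_geW.
Qed.

Lemma Bzero_homog0 x : x \in H -> homog e 0 x.
Proof. by case/memv_capP => _ /(homogP He). Qed.

Lemma homog0_Bzero x : x \in B -> homog e 0 x -> x \in H.
Proof. by move=> Bx hx; rewrite memv_cap Bx; apply/(homogP He). Qed.

Lemma Aminus_deg_neg x : x \in Aminus e -> deg_neg e x.
Proof.
apply: (lin_closed_sumv (deg_neg_lin_closed e)) => j y _ /(homogP He).
exact: homog_deg_neg.
Qed.

Lemma Bzero_add_Bplus : (H + Bp)%VS = B.
Proof.
apply/eqP; rewrite eqEsubv subv_add Bzero_sub Bplus_sub andbT.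
case: Bgraded => [_ B_gr B_neg]; rewrite {1}B_gr; apply/subv_sumP => j _.
have [lt_jn|le_nj] := ltnP j n; first by rewrite B_neg ?sub0v //; lia.
have [/= jn|ne_jn] := eqVneq (j : nat) n.
  by apply: subv_trans (addvSl _ _); rewrite jn subrr.
have lt_j : (j - n - 1 < n)%N by have := ltn_ord j; lia.
apply: subv_trans (addvSr _ _); apply: (sumv_sup (Ordinal lt_j)) => //=.
by have -> : j%:Z - n%:Z = (j - n - 1).+1%:Z by lia.
Qed.

Lemma Bzero_Bplus_split x : x \in B -> exists2 h, h \in H & exists2 p, p \in Bp & x = h + p.
Proof. by move=> Bx; apply/memv_addP; rewrite Bzero_add_Bplus. Qed.

Lemma deg_ge1_Bplus x : x \in B -> deg_ge e 1%N x -> x \in Bp.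
Proof.
case/Bzero_Bplus_split => h Hh [p Bp_p ->] hp.
suff -> : h = 0 by rewrite add0r.
apply: (homog0_deg_ge1_eq0 He (Bzero_homog0 Hh)).
by rewrite -[h](addrK p); apply: (lin_closedB (deg_ge_lin_closed e 1%N) hp (Bplus_deg_ge1 Bp_p)).
Qed.

Lemma Bzero_capBplus : (H :&: Bp)%VS = 0%VS.
Proof.
apply/vspaceP => x; rewrite memv0 memv_cap.
apply/andP/eqP => [[Hx Bp_x]|->]; last by rewrite !mem0v.
exact: (homog0_deg_ge1_eq0 He (Bzero_homog0 Hx) (Bplus_deg_ge1 Bp_x)).
Qed.

Lemma Bzero_subalg : is_subalg H.
Proof.
split; first exact: (homog0_Bzero memB1 (homog0_1 He)).
apply/prodvP => x y Hx Hy; apply: homog0_Bzero; first by rewrite memBM ?(subvP Bzero_sub).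
by rewrite -(addr0 0); apply: (homogM He); apply: Bzero_homog0.
Qed.

Lemma Bplus_mull x y : x \in B -> y \in Bp -> x * y \in Bp.
Proof.
move=> Bx Bp_y; apply: deg_ge1_Bplus; first by apply: memBM => //; apply: (subvP Bplus_sub).
by rewrite -(add0n 1%N); apply: (deg_geM He); [apply: B_deg_ge0 | apply: Bplus_deg_ge1].
Qed.

Lemma Bplus_mulr x y : x \in Bp -> y \in B -> x * y \in Bp.
Proof.
move=> Bp_x By; apply: deg_ge1_Bplus; first by apply: memBM => //; apply: (subvP Bplus_sub).
by rewrite -(addn0 1%N); apply: (deg_geM He); [apply: Bplus_deg_ge1 | apply: B_deg_ge0].
Qed.

Lemma Bplus_nilpotent p : p \in Bp -> p ^+ n.+1 = 0.
Proof.
move=> Bp_p; apply: (deg_ge_eq0 He); elim: n.+1 => [|k IHk].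
  by rewrite expr0; apply: B_deg_ge0 memB1.
by rewrite exprS -add1n; apply: (deg_geM He) IHk; apply: Bplus_deg_ge1.
Qed.

Lemma Bplus_unit_subr p : p \in Bp -> exists2 q, q \in B & q * (1 - p) = 1.
Proof.
move=> Bp_p; exists (\sum_(k < n.+1) p ^+ k).
  by apply: rpred_sum => k _; apply/memBX/(subvP Bplus_sub).
have comm_p : GRing.comm (\sum_(k < n.+1) p ^+ k) (1 - p).
  apply/commr_sym/commr_sum => k _; apply/commrX/commr_sym.
  exact/commrB/commr_refl/commr1.
by rewrite comm_p -opprB mulNr -subrX1 Bplus_nilpotent // sub0r opprK.
Qed.

Lemma Bplus_jacobson x : x \in Bp -> in_jacobson B x.
Proof.
move=> Bp_x; split=> [|I [[IB /prodvP BI] I_neq Imax]]; first exact: (subvP Bplus_sub).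
have ideal_IBp : left_ideal B (I + Bp)%VS.
  split; first by rewrite subv_add IB Bplus_sub.
  apply/prodvP => b _ Bb /memv_addP [i Ii [p Bp_p ->]].
  by rewrite mulrDr memv_add ?BI ?Bplus_mull.
have [<-|IBpB] := Imax _ ideal_IBp (addvSl _ _); first exact: (subvP (addvSr _ _)).
have /memv_addP [i Ii [p Bp_p ip1]] : 1 \in (I + Bp)%VS by rewrite IBpB memB1.
have [q Bq qp1] := Bplus_unit_subr Bp_p.
have I1 : 1 \in I by rewrite -qp1 {1}ip1 addrK BI.
case/negP: I_neq; rewrite eqEsubv IB; apply/subvP => b Bb.
by rewrite -[b]mulr1 BI.
Qed.

End GradedSubalgebra.

(** * Modules as matrix representations *)

Definition vbasis_comb (F : fieldType) (A : falgType F) (U : {vspace A})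
    (c : 'rV[F]_(\dim U)) : A :=
  \sum_(j < \dim U) c 0 j *: (vbasis U)`_j.
Arguments vbasis_comb {F A} U c.

Section Representations.
Variables (F : fieldType) (A : falgType F).

Lemma vbasis_nth_mem (U : {vspace A}) (j : 'I_(\dim U)) : (vbasis U)`_j \in U.
Proof. exact/vbasis_mem/memt_nth. Qed.

Definition vbasis_coord (U : {vspace A}) (x : A) : 'rV[F]_(\dim U) :=
  \row_j coord (vbasis U) j x.

Lemma vbasis_coord_is_semilinear (U : {vspace A}) : semilinear (vbasis_coord U).
Proof. by split=> [a x|x y]; apply/rowP => j; rewrite !mxE (linearZ, linearD). Qed.
HB.instance Definition _ (U : {vspace A}) := GRing.isSemilinear.Build F A 'rV_(\dim U) _
  (vbasis_coord U) (vbasis_coord_is_semilinear U).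

Lemma vbasis_comb_is_semilinear (U : {vspace A}) : semilinear (vbasis_comb U).
Proof.
split=> [a c|c d]; rewrite /vbasis_comb ?scaler_sumr -?big_split.
  by apply: eq_bigr => j _; rewrite mxE scalerA.
by apply: eq_bigr => j _; rewrite mxE scalerDl.
Qed.
HB.instance Definition _ (U : {vspace A}) := GRing.isSemilinear.Build F 'rV_(\dim U) A _
  (vbasis_comb U) (vbasis_comb_is_semilinear U).

Lemma vbasis_comb_mem (U : {vspace A}) c : vbasis_comb U c \in U.
Proof. by apply: rpred_sum => j _; rewrite rpredZ // vbasis_nth_mem. Qed.

Lemma vbasis_coordK (U : {vspace A}) x : x \in U -> vbasis_comb U (vbasis_coord U x) = x.
Proof. by move/coord_vbasis => {2}->; apply: eq_bigr => j _; rewrite mxE. Qed.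

Lemma vbasis_combK (U : {vspace A}) c : vbasis_coord U (vbasis_comb U c) = c.
Proof. by apply/rowP => j; rewrite mxE coord_sum_free //; exact: basis_free (vbasisP U). Qed.

Lemma full_subalg : is_subalg (fullv : {vspace A}).
Proof. by split; [exact: memvf | exact: subvf]. Qed.

Lemma rep_subv (S T : {vspace A}) m (rho : A -> 'M[F]_m) :
  (T <= S)%VS -> is_rep S rho -> is_rep T rho.
Proof.
move=> /subvP sTS [rho1 rhoD rhoZ rhoM].
by split=> // [a b /sTS Sa /sTS Sb|a /sTS Sa|a b /sTS Sa /sTS Sb]; auto.
Qed.

Section Rep.
Variables (S : {vspace A}) (m : nat) (rho : A -> 'M[F]_m).
Hypothesis rhoS : is_rep S rho.

Lemma rep1 : rho 1 = 1%:M. Proof. by case: rhoS. Qed.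
Lemma repD : {in S &, forall a b, rho (a + b) = rho a + rho b}. Proof. by case: rhoS. Qed.
Lemma repZ : {in S, forall a (c : F), rho (c *: a) = c *: rho a}. Proof. by case: rhoS. Qed.
Lemma repM : {in S &, forall a b, rho (a * b) = rho b *m rho a}. Proof. by case: rhoS. Qed.

Lemma rep0 : rho 0 = 0.
Proof. by rewrite -(scale0r 0) repZ ?mem0v // scale0r. Qed.

Lemma repB : {in S &, forall a b, rho (a - b) = rho a - rho b}.
Proof.
by move=> a b Sa Sb; rewrite repD ?rpredN // -scaleN1r repZ // scaleN1r.
Qed.

Lemma rep_sum (I : Type) (r : seq I) (P : pred I) (f : I -> A) :
  (forall i, P i -> f i \in S) -> rho (\sum_(i <- r | P i) f i) = \sum_(i <- r | P i) rho (f i).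
Proof.
move=> Sf; elim: r => [|i r IHr]; first by rewrite !big_nil rep0.
rewrite !big_cons; case: ifP => // Pi.
by rewrite repD ?IHr ?Sf // rpred_sum.
Qed.

Lemma rep_lin k (c : 'I_k -> F) (b : 'I_k -> A) : (forall i, b i \in S) ->
  rho (\sum_(i < k) c i *: b i) = \sum_(i < k) c i *: rho (b i).
Proof.
move=> Sb; rewrite rep_sum => [|i _]; last by rewrite rpredZ.
by apply: eq_bigr => i _; rewrite repZ.
Qed.

Definition orbit_mx (u : 'rV[F]_m) : 'M[F]_(\dim S, m) :=
  \matrix_(j < \dim S) (u *m rho (vbasis S)`_j).

Lemma orbit_mx_comb u c : c *m orbit_mx u = u *m rho (vbasis_comb S c).
Proof.
rewrite mulmx_sum_row rep_lin => [|j]; last exact: vbasis_nth_mem.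
by rewrite mulmx_sumr; apply: eq_bigr => j _; rewrite rowK scalemxAr.
Qed.

Lemma orbit_mx_coord u x : x \in S -> vbasis_coord S x *m orbit_mx u = u *m rho x.
Proof. by move=> Sx; rewrite orbit_mx_comb vbasis_coordK. Qed.

Lemma sub_orbit_mxP u (y : 'rV[F]_m) :
  reflect (exists2 x, x \in S & y = u *m rho x) (y <= orbit_mx u)%MS.
Proof.
apply: (iffP submxP) => [[c ->]|[x Sx ->]].
  by exists (vbasis_comb S c); rewrite ?vbasis_comb_mem ?orbit_mx_comb.
by exists (vbasis_coord S x); rewrite orbit_mx_coord.
Qed.

(* The annihilator of [v] in [S], read off the kernel of [orbit_mx v]. *)
Definition ann_vs v : {vspace A} :=
  <<[seq vbasis_comb S (row r (kermx (orbit_mx v))) | r <- enum 'I_(\dim S)]>>%VS.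

Lemma ann_vsP v x : reflect (x \in S /\ v *m rho x = 0) (x \in ann_vs v).
Proof.
apply: (iffP idP) => [|[Sx vx0]].
  have lin_ann : lin_closed (fun x => x \in S /\ v *m rho x = 0).
    split=> [|x1 x2 [S1 v1] [S2 v2]|c x1 [S1 v1]].
    - by rewrite mem0v rep0 mulmx0.
    - by rewrite rpredD // repD // mulmxDr v1 v2 addr0.
    - by rewrite rpredZ // repZ // -scalemxAr v1 scaler0.
  apply: (lin_closed_span lin_ann) => _ /mapP [r _ ->].
  by rewrite vbasis_comb_mem -orbit_mx_comb -row_mul mulmx_ker row0.
have /submxP [d cd] : (vbasis_coord S x <= kermx (orbit_mx v))%MS.
  by apply/sub_kermxP; rewrite orbit_mx_coord.
rewrite -(vbasis_coordK Sx) cd mulmx_sum_row linear_sum; apply: rpred_sum => r _.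
by rewrite linearZ; apply/rpredZ/memv_span/map_f; rewrite mem_enum.
Qed.

Hypothesis subalgS : is_subalg S.

Lemma orbit_mx_stable u : stable S rho <<orbit_mx u>>%MS.
Proof.
move=> s Ss; rewrite (eqmxMr _ (genmxE _)) genmxE; apply/row_subP => j.
rewrite row_mul rowK -mulmxA; have Sb := vbasis_nth_mem j.
rewrite -repM //; apply/sub_orbit_mxP; exists (s * (vbasis S)`_j) => //.
by case: subalgS => _ /prodvP; apply.
Qed.

Lemma simple_generated u : simple_sub S rho 1%:M -> u != 0 ->
  forall y : 'rV[F]_m, exists2 x, x \in S & y = u *m rho x.
Proof.
case=> _ _ simple u_neq0 y; apply/sub_orbit_mxP.
have [orbit0|/andP [_ orbit1]] := simple _ (orbit_mx_stable u) (submx1 _).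
  case/negP: u_neq0; rewrite -submx0 -orbit0 genmxE.
  by apply/sub_orbit_mxP; exists 1; [case: subalgS | rewrite rep1 mulmx1].
by rewrite -(genmxE (orbit_mx u)); exact: submx_trans (submx1 y) orbit1.
Qed.

End Rep.

Lemma orbit_hom (S : {vspace A}) m1 m2 (rho1 : A -> 'M[F]_m1) (rho2 : A -> 'M[F]_m2)
    (w1 : 'rV_m1) (w2 : 'rV_m2) :
  is_rep S rho1 -> is_rep S rho2 ->
  (forall x, x \in S -> w1 *m rho1 x = 0 -> w2 *m rho2 x = 0) ->
  exists g : 'M[F]_(m1, m2), forall x, x \in S -> w1 *m rho1 x *m g = w2 *m rho2 x.
Proof.
move=> rho1S rho2S ann_sub; set M1 := orbit_mx S rho1 w1; set M2 := orbit_mx S rho2 w2.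
have ker_sub (c : 'rV_(\dim S)) : c *m M1 = 0 -> c *m M2 = 0.
  by rewrite /M1 /M2 (orbit_mx_comb rho1S) (orbit_mx_comb rho2S); apply/ann_sub/vbasis_comb_mem.
exists (pinvmx M1 *m M2) => x Sx; rewrite -(orbit_mx_coord rho1S) // -(orbit_mx_coord rho2S) //.
set c := vbasis_coord S x; have /ker_sub : (c *m M1 *m pinvmx M1 - c) *m M1 = 0.
  by rewrite mulmxBl mulmxKpV ?submxMl // subrr.
by rewrite mulmxBl mulmxA => /eqP; rewrite subr_eq0 -mulmxA => /eqP.
Qed.

Lemma cyclic_iso (S : {vspace A}) m1 m2 (rho1 : A -> 'M[F]_m1) (rho2 : A -> 'M[F]_m2)
    (U1 : 'M_m1) (U2 : 'M_m2) (w1 : 'rV_m1) (w2 : 'rV_m2) :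
  is_subalg S -> is_rep S rho1 -> is_rep S rho2 ->
  stable S rho1 U1 -> stable S rho2 U2 -> (w1 <= U1)%MS -> (w2 <= U2)%MS ->
  (forall u, (u <= U1)%MS -> exists2 s, s \in S & u = w1 *m rho1 s) ->
  (forall u, (u <= U2)%MS -> exists2 s, s \in S & u = w2 *m rho2 s) ->
  (forall s, s \in S -> w1 *m rho1 s = 0 <-> w2 *m rho2 s = 0) ->
  iso_sub S rho1 U1 rho2 U2.
Proof.
move=> [S1 /prodvP SM] rho1S rho2S U1S U2S w1U w2U gen1 gen2 ann.
have [g wg] := orbit_hom rho1S rho2S (fun s Ss => (ann s Ss).1).
have orbit1 s : s \in S -> (w1 *m rho1 s <= U1)%MS.
  by move=> Ss; apply: submx_trans (U1S s Ss); exact: submxMr.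
have orbit2 s : s \in S -> (w2 *m rho2 s <= U2)%MS.
  by move=> Ss; apply: submx_trans (U2S s Ss); exact: submxMr.
exists g; split.
- apply/andP; split; apply/row_subP => r.
    by rewrite row_mul; have [s Ss ->] := gen1 _ (row_sub r U1); rewrite wg ?orbit2.
  have [s Ss ->] := gen2 _ (row_sub r U2); rewrite -wg //; exact: submxMr (orbit1 s Ss).
- have := mxrank_mul_ker U1 g; suff -> : (U1 :&: kermx g)%MS = 0 by rewrite mxrank0 addn0.
  apply/row_matrixP => r; rewrite row0; set u := row r _.
  have [s Ss u_def] := gen1 u (submx_trans (row_sub _ _) (capmxSl _ _)).
  have : u *m g = 0 by apply/sub_kermxP; exact: submx_trans (row_sub _ _) (capmxSr _ _).
  by rewrite u_def wg // => /(ann s Ss).2.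
- move=> s Ss; apply/row_matrixP => r; rewrite !row_mul.
  have [t St ->] := gen1 _ (row_sub r U1).
  by rewrite -(mulmxA w1) -(repM rho1S) // wg ?SM // (repM rho2S) // mulmxA wg.
Qed.

Lemma mxrank_mul_eq_inj m n p (U : 'M[F]_(m, n)) (f : 'M[F]_(n, p)) (u : 'rV[F]_n) :
  \rank (U *m f) = \rank U -> (u <= U)%MS -> u *m f = 0 -> u = 0.
Proof.
move=> rank_f u_U uf0; have cap0 : (U :&: kermx f)%MS = 0.
  apply/eqP; rewrite -mxrank_eq0; have := mxrank_mul_ker U f.
  by rewrite rank_f => /eqP; rewrite -{2}[\rank U]addn0 eqn_add2l.
have : (u <= U :&: kermx f)%MS by rewrite sub_capmx u_U sub_kermx uf0 eqxx.
by rewrite cap0 submx0 => /eqP.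
Qed.

Lemma sub_bigcap_seq m k (U : 'M[F]_(k, m)) (s : seq A) (f : A -> 'M[F]_m) :
  (U <= \bigcap_(b <- s) f b)%MS = all (fun b => U <= f b)%MS s.
Proof.
elim: s => [|b s IHs]; first by rewrite big_nil submx1.
by rewrite big_cons sub_capmx IHs.
Qed.

Section FullRep.
Variables (m : nat) (rho : A -> 'M[F]_m).
Hypothesis rhoA : is_rep fullv rho.

Lemma full_repD a b : rho (a + b) = rho a + rho b.
Proof. exact: repD (memvf a) (memvf b). Qed.
Lemma full_repZ (c : F) a : rho (c *: a) = c *: rho a.
Proof. exact: repZ (memvf a) c. Qed.
Lemma full_repM a b : rho (a * b) = rho b *m rho a.
Proof. exact: repM (memvf a) (memvf b). Qed.

Lemma lin_closed_ann k (v : 'M[F]_(k, m)) (f : A -> A) :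
  {morph f : x y / x + y} -> (forall (c : F) x, f (c *: x) = c *: f x) ->
  lin_closed (fun x => v *m rho (f x) = 0).
Proof.
move=> fD fZ; split=> [|x y vx vy|c x vx].
- by rewrite -(scale0r 0) fZ scale0r (rep0 rhoA) mulmx0.
- by rewrite fD full_repD mulmxDr vx vy addr0.
- by rewrite fZ full_repZ -scalemxAr vx scaler0.
Qed.

Lemma lin_closed_ann_mull k (v : 'M[F]_(k, m)) a :
  lin_closed (fun x => v *m rho (a * x) = 0).
Proof. exact: lin_closed_ann (mulrDr a) (fun c x => esym (scalerAr c a x)). Qed.

Lemma lin_closed_ann_mulr k (v : 'M[F]_(k, m)) a :
  lin_closed (fun x => v *m rho (x * a) = 0).
Proof. exact: lin_closed_ann (fun x y => mulrDl x y a) (fun c x => esym (scalerAl c x a)). Qed.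

Lemma fixspP (Bp : {vspace A}) k (U : 'M[F]_(k, m)) :
  reflect (forall p, p \in Bp -> U *m rho p = 0) (U <= fixsp Bp rho)%MS.
Proof.
rewrite /fixsp sub_bigcap_seq.
apply: (iffP allP) => [Ukill p Bp_p|Ukill b Bb]; last by rewrite sub_kermx Ukill ?vbasis_mem.
rewrite (coord_vbasis Bp_p) (rep_lin rhoA) => [|i]; last exact: memvf.
rewrite mulmx_sumr big1 // => i _; rewrite -scalemxAr.
by move/sub_kermxP: (Ukill _ (memt_nth 0 (vbasis Bp) (ltn_ord i))) => ->; rewrite scaler0.
Qed.

Lemma fixsp_ann (Bp : {vspace A}) k (v : 'M[F]_(k, m)) p :
  (v <= fixsp Bp rho)%MS -> p \in Bp -> v *m rho p = 0.
Proof. by move/fixspP; apply. Qed.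

End FullRep.

Lemma iso_fixsp (S Bp : {vspace A}) m1 m2 (rho1 : A -> 'M[F]_m1) (rho2 : A -> 'M[F]_m2) :
  is_rep fullv rho1 -> is_rep fullv rho2 -> iso_sub fullv rho1 1%:M rho2 1%:M ->
  iso_sub S rho1 (fixsp Bp rho1) rho2 (fixsp Bp rho2).
Proof.
move=> rho1A rho2A [f []]; rewrite !mul1mx sub1mx => /andP [_ f_full] rank_f f_comm.
have f_free : row_free f by rewrite /row_free rank_f mxrank1.
have {}f_comm s : rho1 s *m f = f *m rho2 s by have := f_comm s (memvf s); rewrite !mul1mx.
have fix_f k (U : 'M_(k, m1)) : (U <= fixsp Bp rho1)%MS = (U *m f <= fixsp Bp rho2)%MS.
  apply/(fixspP rho1A)/(fixspP rho2A) => U0 p Bp_p.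
    by rewrite -mulmxA -f_comm mulmxA U0 ?mul0mx.
  by apply/eqP; rewrite -(mulmx_free_eq0 _ f_free) -mulmxA f_comm mulmxA U0.
exists f; split; last by move=> s _; rewrite -!mulmxA f_comm.
- rewrite -fix_f submx_refl /=.
  have fix2_f : fixsp Bp rho2 *m pinvmx f *m f = fixsp Bp rho2 by rewrite mulmxKpV // submx_full.
  by rewrite -{1}fix2_f submxMr // fix_f fix2_f.
- exact: mxrankMfree.
Qed.

End Representations.

Section GradedModules.
Variables (F : fieldType) (A : falgType F) (n : nat) (e : 'I_n.+1 -> A) (B : {vspace A}).
Hypotheses (He : idem_decomp e) (Bgraded : Ngraded_subalg e B) (Bcomplete : complete e B).

Local Notation H := (Bzero e B).
Local Notation Bp := (Bplus e B).

Section Module.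
Variables (m : nat) (rho : A -> 'M[F]_m).
Hypothesis rhoA : is_rep fullv rho.

Definition vec_deg k (v : 'M[F]_(k, m)) i := v *m rho (e i) = v.

Lemma fixsp_Bzero_stable : stable H rho (fixsp Bp rho).
Proof.
move=> h Hh; apply/(fixspP rhoA) => p Bp_p; rewrite -mulmxA -full_repM //.
apply: (fixsp_ann rhoA (submx_refl _)); apply: (Bplus_mulr He Bgraded Bp_p).
exact: (subvP (Bzero_sub e B)).
Qed.

Lemma fixsp_mul_idem k (u : 'M[F]_(k, m)) i :
  (u <= fixsp Bp rho)%MS -> (u *m rho (e i) <= fixsp Bp rho)%MS.
Proof.
move=> u_fix; apply/(fixspP rhoA) => p Bp_p; rewrite -mulmxA -full_repM //.
apply: (lin_closed_sumv (lin_closed_ann_mulr rhoA u (e i))) Bp_p => j q _ Bq.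
have Bp_q : q \in Bp by apply: (sumv_sup j) Bq.
move/memv_capP: Bq => [_ /(homogP He) /(homog_mul_idem He i)].
move=> -[->|[l ->]]; first by rewrite (rep0 rhoA) mulmx0.
by rewrite full_repM // mulmxA (fixsp_ann rhoA u_fix Bp_q) mul0mx.
Qed.

Lemma Bzero_act_deg k (v : 'M[F]_(k, m)) i h : vec_deg v i -> h \in H ->
  forall l, v *m rho h *m rho (e l) = if l == i then v *m rho h else 0.
Proof.
move=> v_i Hh l; have h0 := Bzero_homog0 He Hh.
rewrite -{1}v_i -!mulmxA -!full_repM //.
have [->|li] := eqVneq l i; first by rewrite (homog0_peirce He _ h0) full_repM // mulmxA v_i.
by rewrite h0 ?(rep0 rhoA) ?mulmx0 // subr_eq0 eqz_nat eq_sym.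
Qed.

Lemma AminusB_act_deg_lt k (v : 'M[F]_(k, m)) i c : c \in (Aminus e * B)%VS ->
  (v <= fixsp Bp rho)%MS -> vec_deg v i ->
  forall l : 'I_n.+1, (l <= i)%N -> v *m rho c *m rho (e l) = 0.
Proof.
move=> AmBc v_fix v_i l le_li; rewrite -mulmxA -full_repM //.
apply: (lin_closed_prodv (lin_closed_ann_mull rhoA v (e l))) AmBc => a b Am_a Bb.
have [h Hh [p Bp_p ->]] := Bzero_Bplus_split Bgraded Bb.
rewrite mulrA full_repM // full_repD // mulmxA mulmxDr.
rewrite (fixsp_ann rhoA v_fix Bp_p) addr0 -{1}v_i -!mulmxA -!full_repM //.
rewrite -mulrA -(homog0_comm He i (Bzero_homog0 He Hh)) mulrA.
by rewrite (Aminus_deg_neg He Am_a) ?mul0r ?(rep0 rhoA) ?mulmx0.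
Qed.

Lemma act_deg_decomp h p c k (v : 'M[F]_(k, m)) i :
  h \in H -> p \in Bp -> c \in (Aminus e * B)%VS ->
  (v <= fixsp Bp rho)%MS -> vec_deg v i ->
  v *m rho (h + p + c) *m rho (e i) = v *m rho h /\
  forall l : 'I_n.+1, (l < i)%N -> v *m rho (h + p + c) *m rho (e l) = 0.
Proof.
move=> Hh Bp_p AmBc v_fix v_i.
have act_l l : v *m rho (h + p + c) *m rho (e l) =
    v *m rho h *m rho (e l) + v *m rho c *m rho (e l).
  by rewrite !full_repD // !mulmxDr (fixsp_ann rhoA v_fix Bp_p) addr0 mulmxDl.
split=> [|l lt_li]; rewrite act_l (AminusB_act_deg_lt AmBc v_fix v_i) ?addr0 ?(ltnW lt_li) //.
  by rewrite (Bzero_act_deg v_i Hh) eqxx.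
by rewrite (Bzero_act_deg v_i Hh); case: eqP lt_li => // ->; rewrite ltnn.
Qed.

End Module.

(* The witness [h] does not depend on the module: this is what allows comparing
   two simple modules in [fixsp_ann_sub]. *)
Lemma complete_act x : exists2 h, h \in H &
  forall m (rho : A -> 'M[F]_m), is_rep fullv rho ->
  forall k (v : 'M[F]_(k, m)) i, (v <= fixsp Bp rho)%MS -> vec_deg rho v i ->
  v *m rho x *m rho (e i) = v *m rho h /\
  forall l : 'I_n.+1, (l < i)%N -> v *m rho x *m rho (e l) = 0.
Proof.
case: Bcomplete => BAmB _.
have /memv_addP [b Bb [c AmBc ->]] : x \in (B + Aminus e * B)%VS by rewrite BAmB memvf.
have [h Hh [p Bp_p ->]] := Bzero_Bplus_split Bgraded Bb.
by exists h => // m rho rhoA k v i; apply: act_deg_decomp.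
Qed.

End GradedModules.

(** * Fixed spaces of simple modules *)

Section SimpleModules.
Variables (F : fieldType) (A : falgType F) (n : nat) (e : 'I_n.+1 -> A) (B : {vspace A}).
Hypotheses (He : idem_decomp e) (Bgraded : Ngraded_subalg e B) (Bcomplete : complete e B).

Local Notation H := (Bzero e B).
Local Notation Bp := (Bplus e B).

Section Simple.
Variables (m : nat) (rho : A -> 'M[F]_m).
Hypotheses (rhoA : is_rep fullv rho) (rho_simple : simple_sub fullv rho 1%:M).

Lemma simple_generated_full u : u != 0 ->
  forall y : 'rV[F]_m, exists2 x, x \in fullv & y = u *m rho x.
Proof. exact: (simple_generated rhoA (full_subalg A) rho_simple). Qed.

Lemma idem_vec_deg i : rho (e i) != 0 -> exists2 y : 'rV[F]_m, vec_deg e rho y i & y != 0.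
Proof.
case/rowV0Pn => _ /submxP [y ->] y_neq0; exists (y *m rho (e i)) => //.
by rewrite /vec_deg -mulmxA -full_repM // idem_id.
Qed.

(* [w] generates the module, and by [complete_act] its orbit has no component of
   degree below [i]. *)
Lemma fixsp_deg_lt (w : 'rV[F]_m) i : (w <= fixsp Bp rho)%MS -> vec_deg e rho w i ->
  w != 0 -> forall l : 'I_n.+1, (l < i)%N -> rho (e l) = 0.
Proof.
move=> w_fix w_i w_neq0 l lt_li; apply/eqP; apply: contraT => /idem_vec_deg [y y_l].
have [x _ y_def] := simple_generated_full w_neq0 y.
case: (complete_act He Bgraded Bcomplete x) => h _ /(_ _ _ rhoA _ w i w_fix w_i) [_ /(_ l lt_li)].
by rewrite -y_def y_l => ->; rewrite eqxx.
Qed.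

Lemma lowest_idem : exists i0 : 'I_n.+1,
  rho (e i0) != 0 /\ forall k : 'I_n.+1, (k < i0)%N -> rho (e k) = 0.
Proof.
have [i nz_i] : exists i, rho (e i) != 0.
  apply/existsP; apply: contraT => /existsPn all0; case: rho_simple => _ /negP [].
  rewrite -(rep1 rhoA) -(sum_idem He) (rep_sum rhoA) => [|i _]; last exact: memvf.
  by rewrite big1 // => i _; apply/eqP/negbNE/all0.
case: (@arg_minnP _ i (fun j => rho (e j) != 0) val nz_i) => i0 nz_i0 min_i0.
exists i0; split=> // k lt_k; apply/eqP; apply: contraTT lt_k => /min_i0.
by rewrite -leqNgt.
Qed.

Lemma fixsp_lowest_deg : exists i0 : 'I_n.+1,
  [/\ rho (e i0) != 0, forall k : 'I_n.+1, (k < i0)%N -> rho (e k) = 0 &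
      forall u : 'rV[F]_m, (u <= fixsp Bp rho)%MS -> vec_deg e rho u i0].
Proof.
have [i0 [nz_i0 low]] := lowest_idem; exists i0; split=> // u u_fix.
rewrite /vec_deg {2}(_ : u = \sum_i u *m rho (e i)); last first.
  rewrite -mulmx_sumr -(rep_sum rhoA) => [|i _]; last exact: memvf.
  by rewrite (sum_idem He) (rep1 rhoA) mulmx1.
rewrite (bigD1 i0) //= big1 ?addr0 // => i ne_i.
have [lt_i|le_i] := ltnP i i0; first by rewrite low // mulmx0.
apply/eqP; move: nz_i0; apply: contraNT => w_neq0; apply/eqP.
have w_i : vec_deg e rho (u *m rho (e i)) i by rewrite /vec_deg -mulmxA -full_repM // idem_id.
apply: fixsp_deg_lt (fixsp_mul_idem He rhoA i u_fix) w_i w_neq0 _ _.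
by rewrite ltn_neqAle le_i andbT eq_sym.
Qed.

Lemma fixsp_neq0 : fixsp Bp rho != 0.
Proof.
have [i0 [/idem_vec_deg [y y_i0 y_neq0] low _]] := fixsp_lowest_deg.
apply: contraNneq y_neq0 => fix0; rewrite -submx0 -fix0.
apply/(fixspP rhoA) => p Bp_p; rewrite -y_i0 -mulmxA -full_repM //.
rewrite (peirce_sumr He) (rep_sum rhoA) => [|l _]; last exact: memvf.
rewrite mulmx_sumr big1 // => l _.
have [lt_l|le_l] := ltnP l i0; first by rewrite !full_repM // (low l lt_l) !mulmx0.
by rewrite (Bplus_deg_ge1 He Bp_p) ?(rep0 rhoA) ?mulmx0 // addn1 ltnS.
Qed.

Lemma fixsp_generated (u w : 'rV[F]_m) : (u <= fixsp Bp rho)%MS -> (w <= fixsp Bp rho)%MS ->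
  w != 0 -> exists2 h, h \in H & u = w *m rho h.
Proof.
move=> u_fix w_fix w_neq0; have [i0 [_ _ fix_deg]] := fixsp_lowest_deg.
have [x _ u_def] := simple_generated_full w_neq0 u.
case: (complete_act He Bgraded Bcomplete x) => h Hh /(_ _ _ rhoA _ w i0 w_fix (fix_deg _ w_fix)).
by case=> act_x _; exists h => //; rewrite -act_x -u_def fix_deg.
Qed.

Lemma fixsp_simple : simple_sub H rho (fixsp Bp rho).
Proof.
split; [exact: fixsp_Bzero_stable | exact: fixsp_neq0 |] => V V_stable V_fix.
have [->|/rowV0Pn [w w_V w_neq0]] := eqVneq V 0; [by left | right].
rewrite V_fix /=; apply/row_subP => r.
have [h Hh ->] := fixsp_generated (row_sub r _) (submx_trans w_V V_fix) w_neq0.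
exact: submx_trans (submxMr (rho h) w_V) (V_stable h Hh).
Qed.

End Simple.

Lemma fixsp_ann_sub m1 (rho1 : A -> 'M[F]_m1) m2 (rho2 : A -> 'M[F]_m2)
    (w1 : 'rV_m1) (w2 : 'rV_m2) :
  is_rep fullv rho1 -> simple_sub fullv rho1 1%:M ->
  is_rep fullv rho2 -> simple_sub fullv rho2 1%:M ->
  (w1 <= fixsp Bp rho1)%MS -> (w2 <= fixsp Bp rho2)%MS ->
  (forall h, h \in H -> w1 *m rho1 h = 0 -> w2 *m rho2 h = 0) ->
  forall x, w1 *m rho1 x = 0 -> w2 *m rho2 x = 0.
Proof.
move=> rho1A rho1_simple rho2A rho2_simple w1_fix w2_fix ann_H x w1x.
apply/eqP; apply: contraT => w2x_neq0.
have [x' _ w2_def] := simple_generated_full rho2A rho2_simple w2x_neq0 w2.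
have [i1 [_ _ deg1]] := fixsp_lowest_deg rho1A rho1_simple.
have [i2 [_ _ deg2]] := fixsp_lowest_deg rho2A rho2_simple.
case: (complete_act He Bgraded Bcomplete (x' * x)) => h Hh act.
have [act1 _] := act _ _ rho1A _ w1 i1 w1_fix (deg1 _ w1_fix).
have [act2 _] := act _ _ rho2A _ w2 i2 w2_fix (deg2 _ w2_fix).
rewrite (full_repM rho1A) mulmxA w1x !mul0mx in act1.
rewrite (full_repM rho2A) mulmxA -w2_def deg2 // (ann_H h Hh (esym act1)) in act2.
by rewrite act2 mul0mx eqxx in w2x_neq0.
Qed.

Lemma fixsp_iso m1 (rho1 : A -> 'M[F]_m1) m2 (rho2 : A -> 'M[F]_m2) :
  is_rep fullv rho1 -> simple_sub fullv rho1 1%:M ->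
  is_rep fullv rho2 -> simple_sub fullv rho2 1%:M ->
  iso_sub H rho1 (fixsp Bp rho1) rho2 (fixsp Bp rho2) -> iso_sub fullv rho1 1%:M rho2 1%:M.
Proof.
move=> rho1A rho1_simple rho2A rho2_simple [f [/andP [fix_f _] rank_f f_comm]].
have /rowV0Pn [w w_fix w_neq0] := fixsp_neq0 rho1A rho1_simple.
have f_inj := mxrank_mul_eq_inj rank_f.
have wf_fix : (w *m f <= fixsp Bp rho2)%MS by apply: submx_trans fix_f; exact: submxMr.
have ann_H h : h \in H -> w *m rho1 h = 0 <-> w *m f *m rho2 h = 0.
  move=> Hh; have [c w_def] := submxP w_fix.
  have -> : w *m f *m rho2 h = w *m rho1 h *m f.
    by rewrite w_def -!mulmxA; congr (c *m _); rewrite !mulmxA f_comm.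
  split=> [-> |/f_inj -> //]; first by rewrite mul0mx.
  exact: submx_trans (submxMr _ w_fix) (fixsp_Bzero_stable He Bgraded rho1A Hh).
have wf_neq0 : w *m f != 0 by apply: contraNneq w_neq0 => /f_inj ->.
apply: (cyclic_iso (full_subalg A) rho1A rho2A) (submx1 w) (submx1 (w *m f)) _ _ _.
- by move=> s _; apply: submx1.
- by move=> s _; apply: submx1.
- by move=> u _; apply: simple_generated_full.
- by move=> u _; apply: simple_generated_full.
move=> s _; split.
  apply: (fixsp_ann_sub rho1A rho1_simple rho2A rho2_simple w_fix wf_fix) => h Hh.
  exact: (ann_H h Hh).1.
apply: (fixsp_ann_sub rho2A rho2_simple rho1A rho1_simple wf_fix w_fix) => h Hh.
exact: (ann_H h Hh).2.
Qed.

End SimpleModules.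

(** * Quotient modules and lifting of simple [H]-modules *)

Section QuotientModule.
Variables (F : fieldType) (A : falgType F) (I : {vspace A}).

(* [A / I] is modelled on the complement [I^C], in the coordinates of its basis. *)
Definition quot_dim := \dim (I^C)%VS.

Definition quot_vec (x : A) : 'rV[F]_quot_dim := vbasis_coord (I^C)%VS (x - projv I x).

Definition quot_rep (a : A) : 'M[F]_quot_dim :=
  \matrix_(j < quot_dim) quot_vec (a * (vbasis (I^C)%VS)`_j).

Lemma quot_vec_is_semilinear : semilinear quot_vec.
Proof.
split=> [c x|x y]; rewrite /quot_vec.
  by rewrite [projv I _]linearZ /= -scalerBr linearZ.
by rewrite [projv I _]linearD /= opprD addrACA linearD.
Qed.
HB.instance Definition _ := GRing.isSemilinear.Build F A 'rV_quot_dim _ quot_vec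
  quot_vec_is_semilinear.

Lemma quot_vec_eq0 x : (quot_vec x == 0) = (x \in I).
Proof.
apply/eqP/idP => [x0|Ix]; last by rewrite /quot_vec projv_id // subrr linear0.
rewrite -[x](subrK (projv I x)) -(vbasis_coordK (memv_projC I x)) -/(quot_vec x) x0.
by rewrite linear0 add0r memv_proj.
Qed.

Lemma quot_vec_compl c : c \in (I^C)%VS -> quot_vec c = vbasis_coord (I^C)%VS c.
Proof.
move=> Cc; suff pc0 : projv I c = 0 by rewrite /quot_vec pc0 subr0.
apply/eqP; rewrite -memv0 -(capv_compl I) memv_cap memv_proj /=.
by rewrite -[projv _ _](subKr c) memvB ?memv_projC.
Qed.

Lemma quot_vecK y : quot_vec (vbasis_comb (I^C)%VS y) = y.
Proof. by rewrite quot_vec_compl ?vbasis_comb_mem ?vbasis_combK. Qed.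

Lemma quot_vec_basis (i : 'I_quot_dim) : quot_vec (vbasis (I^C)%VS)`_i = 'e_i.
Proof.
rewrite quot_vec_compl ?vbasis_nth_mem //; apply/rowP => j.
by rewrite !mxE coord_free ?eqxx 1?eq_sym //; exact: basis_free (vbasisP _).
Qed.

Hypothesis I_ideal : (fullv * I <= I)%VS.

Lemma quot_vecM a x : quot_vec (a * x) = quot_vec x *m quot_rep a.
Proof.
have x_rest : x - vbasis_comb (I^C)%VS (quot_vec x) \in I.
  by rewrite vbasis_coordK ?memv_projC // opprB addrC subrK memv_proj.
have : a * (x - vbasis_comb (I^C)%VS (quot_vec x)) \in I.
  by rewrite (subvP I_ideal) // memv_mul ?memvf.
rewrite -[a * x](subrK (a * vbasis_comb (I^C)%VS (quot_vec x))) -mulrBr linearD /=.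
rewrite -quot_vec_eq0 => /eqP ->; rewrite add0r mulmx_sum_row.
rewrite mulr_sumr linear_sum; apply: eq_bigr => j _.
by rewrite rowK -scalerAr linearZ.
Qed.

Lemma quot_rep_is_rep : is_rep fullv quot_rep.
Proof.
split=> [|a b _ _|a _ c|a b _ _]; apply/row_matrixP => i; rewrite ?row_mul !rowK.
- by rewrite mul1r quot_vec_basis row1.
- by rewrite mulrDl !linearD /= !rowK.
- by rewrite -scalerAl !linearZ /= rowK.
- by rewrite -mulrA quot_vecM.
Qed.

Lemma quot_preimage (V : 'M[F]_quot_dim) :
  exists2 J : {vspace A}, (I <= J)%VS & forall x, (x \in J) = (quot_vec x <= V)%MS.
Proof.
set W := <<[seq vbasis_comb (I^C)%VS (row r V) | r <- enum 'I_quot_dim]>>%VS.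
have quot_W w : w \in W -> (quot_vec w <= V)%MS.
  have lin_V : lin_closed (fun w => quot_vec w <= V)%MS.
    split=> [|x y xV yV|c x xV]; rewrite (linear0, linearD, linearZ) /=.
    - exact: sub0mx.
    - exact: addmx_sub.
    - exact: scalemx_sub.
  by apply: (lin_closed_span lin_V) => _ /mapP [r _ ->]; rewrite quot_vecK row_sub.
exists (I + W)%VS => [|x]; first exact: addvSl.
apply/idP/idP => [/memv_addP [i Ii [w Ww ->]]|/submxP [c xc]].
  by move: Ii; rewrite linearD /= -quot_vec_eq0 => /eqP ->; rewrite add0r quot_W.
pose w := \sum_(r < quot_dim) c 0 r *: vbasis_comb (I^C)%VS (row r V).
have Ww : w \in W by apply: rpred_sum => r _; apply/rpredZ/memv_span/map_f; rewrite mem_enum.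
have Ixw : x - w \in I.
  rewrite -quot_vec_eq0 linearB /= xc mulmx_sum_row linear_sum subr_eq0 /=.
  by apply/eqP; apply: eq_bigr => r _; rewrite linearZ /= quot_vecK.
by rewrite -(subrK w x) memv_add.
Qed.

Hypotheses (one_notin_I : 1 \notin I)
  (I_max : forall J, (fullv * J <= J)%VS -> (I <= J)%VS -> 1 \notin J -> J = I).

Lemma quot_rep_simple : simple_sub fullv quot_rep 1%:M.
Proof.
have q1_neq0 : quot_vec 1 != 0 by rewrite quot_vec_eq0.
split=> [s _||V V_stable _]; first exact: submx1.
  by apply: contraNneq q1_neq0 => q0; rewrite -[quot_vec 1]mulmx1 q0 mulmx0.
have [J IJ memJ] := quot_preimage V.
have J_ideal : (fullv * J <= J)%VS.
  apply/prodvP => a x _; rewrite !memJ quot_vecM => xV.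
  exact: submx_trans (submxMr _ xV) (V_stable a (memvf a)).
have [J1|J1] := boolP (1 \in J).
  right; rewrite submx1 /=; apply/row_subP => r.
  rewrite row1 -(quot_vec_basis r) -[(vbasis _)`_r]mulr1 quot_vecM.
  by apply: submx_trans (V_stable _ (memvf _)); apply: submxMr; rewrite -memJ.
left; apply/row_matrixP => r; rewrite row0 -(quot_vecK (row r V)); apply/eqP.
have JI : (J <= I)%VS by rewrite (I_max J_ideal IJ J1).
by rewrite quot_vec_eq0 (subvP JI) // memJ quot_vecK row_sub.
Qed.

End QuotientModule.

Lemma maximal_extension (F : fieldType) (A : falgType F) (P : {vspace A} -> Prop) U :
  P U -> exists2 V, P V & (U <= V)%VS /\ forall W, P W -> (V <= W)%VS -> W = V.
Proof.
have [k] := ubnP (\dim (fullv : {vspace A}) - \dim U); elim: k U => // k IHk U codimU PU.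
have [[W [PW UW WU]]|maxU] := classic (exists W, [/\ P W, (U <= W)%VS & W <> U]).
  have ltUW : (\dim U < \dim W)%N.
    rewrite ltn_neqAle dimvS // andbT; apply: contra_notN WU => /eqP dimUW.
    by apply/eqP; rewrite eq_sym eqEdim UW dimUW /=.
  have [|V PV [WV Vmax]] := IHk W _ PW; last by exists V => //; split=> //; exact: subv_trans UW WV.
  by have := dimvS (subvf W); lia.
exists U => //; split=> [|W PW UW]; first exact: subvv.
by apply: NNPP => WU; apply: maxU; exists W.
Qed.

Section SimpleLift.
Variables (F : fieldType) (A : falgType F) (n : nat) (e : 'I_n.+1 -> A) (B : {vspace A}).
Hypotheses (He : idem_decomp e) (Bgraded : Ngraded_subalg e B) (Bcomplete : complete e B).

Local Notation H := (Bzero e B).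
Local Notation Bp := (Bplus e B).

Variables (m' : nat) (rho' : A -> 'M[F]_m') (v0 : 'rV[F]_m').
Hypotheses (rho'H : is_rep H rho') (rho'_simple : simple_sub H rho' 1%:M) (v0_neq0 : v0 != 0).

Local Notation J := (ann_vs H rho' v0).

Lemma Bplus_ann_sub : (Bp + J <= B)%VS.
Proof.
rewrite subv_add Bplus_sub; apply/subvP => x /(ann_vsP rho'H) [Hx _].
exact: (subvP (Bzero_sub e B)).
Qed.

Lemma Bplus_ann_mull : (B * (Bp + J) <= Bp + J)%VS.
Proof.
apply/prodvP => b _ Bb /memv_addP [p Bp_p [j Jj ->]].
have [Hj v0j] := ann_vsP rho'H _ _ Jj.
have Bj : j \in B := subvP (Bzero_sub e B) _ Hj.
have [h Hh [p' Bp_p' b_def]] := Bzero_Bplus_split Bgraded Bb.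
rewrite mulrDr {2}b_def mulrDl addrCA addrC memv_add //.
  by apply: memvD; [apply: (Bplus_mull He Bgraded) | apply: (Bplus_mulr He Bgraded)].
apply/ann_vsP => //; split; first by case: (Bzero_subalg He Bgraded) => _ /prodvP; apply.
by rewrite (repM rho'H) // mulmxA v0j mul0mx.
Qed.

Lemma ann_ideal_sub : (fullv * (Bp + J) <= (Bp + J) + Aminus e * B)%VS.
Proof.
case: Bcomplete => <- _; rewrite prodvDl addvS ?Bplus_ann_mull // -prodvA prodvSr //.
exact: subv_trans Bplus_ann_mull Bplus_ann_sub.
Qed.

Lemma one_notin_ann_ideal : 1 \notin (fullv * (Bp + J))%VS.
Proof.
apply/negP => /(subvP ann_ideal_sub) /memv_addP [x BpJx [c AmBc one_xc]].
have Bx : x \in B := subvP Bplus_ann_sub _ BpJx.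
have c0 : c = 0.
  apply/eqP; rewrite -memv0; case: Bcomplete => _ <-; rewrite memv_cap AmBc andbT.
  have -> : c = 1 - x by rewrite one_xc addrC addKr.
  exact: memvB (memB1 Bgraded) Bx.
move: BpJx; rewrite -[x]addr0 -c0 -one_xc => /memv_addP [p Bp_p [j Jj one_pj]].
have [Hj v0j] := ann_vsP rho'H _ _ Jj.
have p0 : p = 0.
  apply/eqP; rewrite -memv0 -(Bzero_capBplus B He) memv_cap Bp_p andbT.
  have -> : p = 1 - j by rewrite one_pj addrK.
  by apply: memvB Hj; case: (Bzero_subalg He Bgraded).
move: v0j; rewrite -[j]add0r -p0 -one_pj (rep1 rho'H) mulmx1 => v00.
by have := v0_neq0; rewrite v00 eqxx.
Qed.

Section MaximalIdeal.
Variable I : {vspace A}.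
Hypotheses (I_ideal : (fullv * I <= I)%VS) (annI : (fullv * (Bp + J) <= I)%VS)
  (one_notin_I : 1 \notin I)
  (I_max : forall I', (fullv * I' <= I')%VS -> (I <= I')%VS -> 1 \notin I' -> I' = I).

Local Notation rho := (quot_rep I).

Lemma Bplus_ann_subI : (Bp + J <= I)%VS.
Proof. by apply/subvP => x BpJx; rewrite (subvP annI) // -[x]mul1r memv_mul ?memvf. Qed.

Lemma quot_vec1_fixsp : (quot_vec I 1 <= fixsp Bp rho)%MS.
Proof.
apply/(fixspP (quot_rep_is_rep I_ideal)) => p Bp_p; apply/eqP.
rewrite -quot_vecM // mulr1 quot_vec_eq0; apply: (subvP Bplus_ann_subI).
exact: (subvP (addvSl _ _)).
Qed.

Lemma quot_vec1_ann h : h \in H -> quot_vec I 1 *m rho h = 0 <-> v0 *m rho' h = 0.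
Proof.
have [H1 /prodvP HM] := Bzero_subalg He Bgraded.
move=> Hh; rewrite -quot_vecM // mulr1; split=> [/eqP|v0h]; last first.
  apply/eqP; rewrite quot_vec_eq0; apply: (subvP Bplus_ann_subI).
  by apply: (subvP (addvSr _ _)); apply/ann_vsP.
rewrite quot_vec_eq0 => Ih; apply/eqP; apply: contraT => v0h_neq0.
have [h' Hh' v0_def] := simple_generated rho'H (Bzero_subalg He Bgraded) rho'_simple v0h_neq0 v0.
have h'h_J : h' * h - 1 \in J.
  apply/ann_vsP => //; split; first by apply: memvB; rewrite ?HM.
  by rewrite (repB rho'H) ?HM // (repM rho'H) // mulmxBr mulmxA -v0_def (rep1 rho'H) mulmx1 subrr.
case/negP: one_notin_I; rewrite -[1](subKr (h' * h)); apply: memvB.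
  by rewrite (subvP I_ideal) // memv_mul ?memvf.
by apply: (subvP Bplus_ann_subI); apply: (subvP (addvSr _ _)).
Qed.

Lemma quot_rep_iso : iso_sub H rho (fixsp Bp rho) rho' 1%:M.
Proof.
have rhoA := quot_rep_is_rep I_ideal.
have rho_simple := quot_rep_simple I_ideal one_notin_I I_max.
have w_neq0 : quot_vec I 1 != 0 by rewrite quot_vec_eq0.
apply: (cyclic_iso (w1 := quot_vec I 1) (w2 := v0) (Bzero_subalg He Bgraded)
  (rep_subv (subvf H) rhoA) rho'H).
- exact: (fixsp_Bzero_stable He Bgraded rhoA).
- by move=> s _; apply: submx1.
- exact: quot_vec1_fixsp.
- exact: submx1.
- move=> u u_fix.
  exact: (fixsp_generated He Bgraded Bcomplete rhoA rho_simple u_fix quot_vec1_fixsp w_neq0).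
- by move=> u _; apply: (simple_generated rho'H (Bzero_subalg He Bgraded) rho'_simple v0_neq0).
- exact: quot_vec1_ann.
Qed.

End MaximalIdeal.

Lemma quot_max_ann_lift : exists m (rho : A -> 'M[F]_m),
  [/\ is_rep fullv rho, simple_sub fullv rho 1%:M & iso_sub H rho (fixsp Bp rho) rho' 1%:M].
Proof.
pose P I := [/\ (fullv * I <= I)%VS, (fullv * (Bp + J) <= I)%VS & 1 \notin I].
have P0 : P (fullv * (Bp + J))%VS.
  by split; rewrite ?subvv ?one_notin_ann_ideal // prodvA prodvSl ?subvf.
have [I [I_ideal annI one_notin_I] [_ I_max]] := maximal_extension P0.
have {}I_max I' : (fullv * I' <= I')%VS -> (I <= I')%VS -> 1 \notin I' -> I' = I.
  by move=> I'_ideal II' one_notin_I'; apply: I_max => //; split=> //; exact: subv_trans annI II'.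
exists (quot_dim I), (quot_rep I); split.
- exact: quot_rep_is_rep.
- exact: quot_rep_simple I_max.
- exact: quot_rep_iso I_max.
Qed.

End SimpleLift.

Lemma Bzero_simple_lift (F : fieldType) (A : falgType F) (n : nat) (e : 'I_n.+1 -> A)
    (B : {vspace A}) m' (rho' : A -> 'M[F]_m') :
  idem_decomp e -> Ngraded_subalg e B -> complete e B ->
  is_rep (Bzero e B) rho' -> simple_sub (Bzero e B) rho' 1%:M ->
  exists m (rho : A -> 'M[F]_m), [/\ is_rep fullv rho, simple_sub fullv rho 1%:M &
    iso_sub (Bzero e B) rho (fixsp (Bplus e B) rho) rho' 1%:M].
Proof.
move=> He Bgraded Bcomplete rho'H rho'_simple.
have [_ /rowV0Pn [v0 _ v0_neq0] _] := rho'_simple.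
exact: (quot_max_ann_lift He Bgraded Bcomplete rho'H rho'_simple v0_neq0).
Qed.

Unset Implicit Arguments.

Theorem lemma3p6 (F : fieldType) (A : falgType F) (n : nat)
    (e : 'I_n.+1 -> A) (B : {vspace A}) :
  idem_decomp e ->
  Ngraded_subalg e B ->
  complete e B ->
  proj_right fullv B ->
  proj_left B (Bzero e B) ->
  pre_borelic B (Bzero e B) (Bplus e B).
Proof.
move=> He Bgraded Bcomplete A_proj B_proj; have [B_subalg _ _] := Bgraded.
split.
- by split; [|split; [exact: Bzero_subalg | exact: Bzero_sub]].
- split; last by split; [exact: Bzero_add_Bplus | exact: Bzero_capBplus].
  split; first exact: Bplus_sub.
    by apply/prodvP => x y; apply: Bplus_mull.
  by apply/prodvP => x y; apply: Bplus_mulr.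
- by split.
- split=> [m rho rhoA rho_simple|m1 rho1 m2 rho2 rho1A rho1_simple rho2A rho2_simple|m' rho'].
  + exact: fixsp_simple.
  + by split; [exact: iso_fixsp | exact: fixsp_iso].
  + exact: Bzero_simple_lift.
- by move=> x; apply: Bplus_jacobson.
Qed.
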